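(* Let $\mathcal{A}$ be a topological ring, let $\mathcal{B}$ be a separated topological ring with separated completion $c\colon\mathcal{B}\to\widehat{\mathcal{B}}$, and let $h_n\colon\mathcal{A}\to\mathcal{B}$, $n\in\mathbb{N}$, be a sequence of group homomorphisms which converges pointwise to the zero homomorphism. Then the map $s\colon\mathcal{A}\to\widehat{\mathcal{B}}\{T\}$, $a\mapsto\sum_{n\in\mathbb{N}}c(h_n(a))T^n$, is a well-defined group homomorphism, and the following are equivalent: (a) $s$ is continuous; (b) every $h_n$ is continuous and the sequence $(h_n)_n$ converges continuously to the zero homomorphism.
   Context: Topological rings are linearly topologized with a countable fundamental system of open ideals; separated means Hausdorff; the separated completion is $\widehat{\mathcal{B}}=\varprojlim_{\mathfrak{b}}\mathcal{B}/\mathfrak{b}$ over open ideals (quotients discrete) with the inverse limit topology and canonical map $c$. For the complete ring $\widehat{\mathcal{B}}$, $\widehat{\mathcal{B}}\{T\}$ is the ring of restricted power series $\sum b_nT^n$ with $b_n\to0$ in $\widehat{\mathcal{B}}$, topologized by the ideals of series with all coefficients in a given open ideal. $(h_n)$ converges pointwise to $0$ if for every $a$ and open ideal $\mathfrak{b}$ there is $n_0$ with $h_n(a)\in\mathfrak{b}$ for $n\ge n_0$; it converges continuously to $0$ if every $h_n$ is continuous and for every $a$ and open ideal $\mathfrak{b}'$ of $\mathcal{B}$ there exist an open ideal $\mathfrak{a}$ of $\mathcal{A}$ and $n_0$ with $h_n(a+x)\in\mathfrak{b}'$ for all $x\in\mathfrak{a}$, $n\ge n_0$. *)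

From mathcomp Require Import all_boot all_algebra.
From mathcomp Require Import boolp classical_sets.
Set Implicit Arguments. Unset Strict Implicit. Unset Printing Implicit Defensive.
Import GRing.Theory.
Local Open Scope ring_scope.

Definition is_ideal (R : comPzRingType) (I : set R) : Prop :=
  [/\ I 0, (forall x y, I x -> I y -> I (x - y))
    & (forall r x, I x -> I (r * x))].

(* A countable fundamental system of open ideals for a linear topology on R:
   a nat-indexed family of ideals which is a filter base. *)
Definition fundamental_system (R : comPzRingType) (I : nat -> set R) : Prop :=
  (forall n, is_ideal (I n)) /\
  (forall m n, exists k, forall x, I k x -> I m x /\ I n x).

Definition open_ideal (R : comPzRingType) (I : nat -> set R) (b : set R) :
  Prop := is_ideal b /\ exists n, forall x, I n x -> b x.

Definition separated (R : comPzRingType) (I : nat -> set R) : Prop :=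
  forall y : R, (forall b, open_ideal I b -> b y) -> y = 0.

Definition OI (R : comPzRingType) (I : nat -> set R) : Type :=
  {b : set R | open_ideal I b}.

(* The coset y + b, i.e. the class of y in R/b. *)
Definition coset (R : comPzRingType) (b : set R) (y : R) : set R :=
  fun z : R => exists2 t, b t & z = y + t.

(* Elements of the separated completion  lim_{b open} R/b : compatible families
   assigning to each open ideal b a class of R/b (a coset of b). *)
Definition compl_elt (R : comPzRingType) (I : nat -> set R)
    (x : OI I -> set R) : Prop :=
  (forall b : OI I, exists y, x b = coset (sval b) y) /\
  (forall b b' : OI I, (forall z, sval b z -> sval b' z) ->
      forall z, x b z -> x b' z).

Definition ccan (R : comPzRingType) (I : nat -> set R) (y : R) : OI I -> set R :=
  fun b => coset (sval b) y.

Definition czero (R : comPzRingType) (I : nat -> set R) : OI I -> set R :=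
  fun b => coset (sval b) 0.
Definition cadd (R : comPzRingType) (I : nat -> set R)
    (x y : OI I -> set R) : OI I -> set R :=
  fun b => fun z : R => exists p q : R, [/\ x b p, y b q & z = p + q].

(* Fundamental system of open neighbourhoods of 0 in R^ for the inverse limit
   topology (quotients discrete): kernels of the projections R^ -> R/b. *)
Definition ker_proj (R : comPzRingType) (I : nat -> set R) (b : OI I) :
  set (OI I -> set R) := fun x => compl_elt x /\ x b = czero b.

(* Restricted power series over R^: coefficient sequences tending to 0. *)
Definition restricted (R : comPzRingType) (I : nat -> set R)
    (u : nat -> OI I -> set R) : Prop :=
  (forall n, compl_elt (u n)) /\
  (forall b : OI I, exists n0, forall n, (n0 <= n)%N -> ker_proj b (u n)).

Definition sadd (R : comPzRingType) (I : nat -> set R)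
    (u v : nat -> OI I -> set R) : nat -> OI I -> set R :=
  fun n => cadd (u n) (v n).

(* Fundamental system of open neighbourhoods of 0 in R^{T}: series all of whose
   coefficients lie in the open ideal ker_proj b of R^. *)
Definition rs_nbhd0 (R : comPzRingType) (I : nat -> set R) (b : OI I) :
  set (nat -> OI I -> set R) :=
  fun w => restricted w /\ forall n, ker_proj b (w n).

Definition sser (A B : comPzRingType) (IB : nat -> set B)
    (h : nat -> A -> B) (a : A) : nat -> OI IB -> set B :=
  fun n => @ccan B IB (h n a).

Definition hcontinuous (A B : comPzRingType) (IA : nat -> set A)
    (IB : nat -> set B) (f : A -> B) : Prop :=
  forall (a : A) (b' : set B), open_ideal IB b' ->
    exists2 aa : set A, open_ideal IA aa &
      forall x, aa x -> b' (f (a + x) - f a).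

Definition scontinuous (A B : comPzRingType) (IA : nat -> set A)
    (IB : nat -> set B) (s : A -> nat -> OI IB -> set B) : Prop :=
  forall (a : A) (b : OI IB),
    exists2 aa : set A, open_ideal IA aa &
      forall x, aa x -> exists2 w, rs_nbhd0 b w & s (a + x) = sadd (s a) w.

Definition pointwise_cvg0 (A B : comPzRingType) (IB : nat -> set B)
    (h : nat -> A -> B) : Prop :=
  forall (a : A) (b : set B), open_ideal IB b ->
    exists n0, forall n, (n0 <= n)%N -> b (h n a).

Definition continuous_cvg0 (A B : comPzRingType) (IA : nat -> set A)
    (IB : nat -> set B) (h : nat -> A -> B) : Prop :=
  (forall n, hcontinuous IA IB (h n)) /\
  forall (a : A) (b' : set B), open_ideal IB b' ->
    exists2 aa : set A, open_ideal IA aa &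
      exists n0, forall x n, aa x -> (n0 <= n)%N -> b' (h n (a + x)).

Arguments ccan {R} I y.
Arguments czero {R} I.
Arguments sser {A B} IB h a.

(* Since every h_n is additive, s(a + x) = s(a) + s(x), and the n-th coefficient
   of s(x) lies in the kernel of B^ -> B/b exactly when h_n(x) lies in b.
   Hence s is continuous (at any point) iff the family (h_n) is equicontinuous
   at 0: every open ideal b of B contains h_n(aa) for all n, for some open ideal
   aa of A.  Equicontinuity at 0 gives (b) by additivity and pointwise
   convergence; conversely (b) gives it for all n beyond some n0 from continuous
   convergence at 0, and for the finitely many n < n0 from the continuity of
   each h_n, as finitely many basic open ideals of A contain a common one. *)

From mathcomp Require Import all_boot all_algebra.
From mathcomp Require Import boolp classical_sets.
Import GRing.Theory.
Set Implicit Arguments. Unset Strict Implicit. Unset Printing Implicit Defensive.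
Local Open Scope ring_scope.

Section Ideal.
Variables (R : comPzRingType) (b : set R).
Hypothesis ideal_b : is_ideal b.

Lemma ideal0 : b 0.
Proof. by case: ideal_b. Qed.

Lemma idealB x y : b x -> b y -> b (x - y).
Proof. by case: ideal_b => _ + _; apply. Qed.

Lemma idealN y : b y -> b (- y).
Proof. by move=> by_; rewrite -sub0r; apply: idealB => //; apply: ideal0. Qed.

Lemma idealD x y : b x -> b y -> b (x + y).
Proof. by move=> bx /idealN bNy; rewrite -[y]opprK; apply: idealB. Qed.

Lemma coset_refl y : coset b y y.
Proof. by exists 0; [apply: ideal0 | rewrite addr0]. Qed.

Lemma coset_eqP y y' : coset b y = coset b y' <-> b (y - y').
Proof.
split=> [E | byy'].
  have : coset b y' y by rewrite -E; apply: coset_refl.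
  by case=> t bt ->; rewrite addrC addKr.
apply: funext => z; apply: propext; split; case=> t bt ->.
  exists ((y - y') + t); first exact: idealD.
  by rewrite addrA addrCA subrr addr0.
exists (t - (y - y')); first exact: idealB.
by rewrite opprB addrCA [y + _]addrCA subrr addr0 addrC.
Qed.

Lemma coset_add y1 y2 :
  (fun z => exists p q : R, [/\ coset b y1 p, coset b y2 q & z = p + q]) =
  coset b (y1 + y2).
Proof.
apply: funext => z; apply: propext; split.
  case=> p [q [[t1 bt1 ->] [t2 bt2 ->] ->]].
  by exists (t1 + t2); [apply: idealD | rewrite addrACA].
case=> t bt ->; exists (y1 + t), y2; split.
- by exists t.
- exact: coset_refl.
- by rewrite addrAC.
Qed.

End Ideal.

Section Completion.
Variables (R : comPzRingType) (I : nat -> set R).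

Lemma OI_ideal (b : OI I) : is_ideal (sval b).
Proof. exact: (proj2_sig b).1. Qed.

Lemma compl_elt_ccan y : compl_elt (ccan I y).
Proof.
split=> [b | b b' sub_bb' z]; first by exists y.
by case=> t bt ->; exists t => //; apply: sub_bb'.
Qed.

Lemma ker_proj_ccan (b : OI I) y : ker_proj b (ccan I y) <-> sval b y.
Proof.
rewrite /ker_proj /ccan /czero coset_eqP ?subr0; last exact: OI_ideal.
by split=> [[] | by_]; last split; [|exact: compl_elt_ccan|].
Qed.

Lemma ccanD y1 y2 : ccan I (y1 + y2) = cadd (ccan I y1) (ccan I y2).
Proof. by apply: funext => b; rewrite /cadd /ccan coset_add //; apply: OI_ideal. Qed.

Lemma ccan_cadd_ker (b : OI I) y1 y2 w :
  ker_proj b w -> ccan I y1 = cadd (ccan I y2) w -> sval b (y1 - y2).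
Proof.
move=> [_ w_b] /(congr1 (fun x => x b)).
rewrite /cadd w_b /czero /ccan coset_add ?addr0; last exact: OI_ideal.
by move/coset_eqP; apply; apply: OI_ideal.
Qed.

End Completion.

Lemma fundamental_system_bound (R : comPzRingType) (I : nat -> set R)
    (P : nat -> set R) :
  fundamental_system I -> (forall n, exists k, forall x, I k x -> P n x) ->
  forall N, exists k, forall x, I k x -> forall n, (n < N)%N -> P n x.
Proof.
move=> [_ I_meet] P_nbhd; elim=> [|N [k IH]]; first by exists 0%N.
have [k' P_N] := P_nbhd N; have [k'' sub_k''] := I_meet k k'.
exists k'' => x /sub_k'' [/IH Px /P_N PNx] n.
by rewrite ltnS leq_eqVlt => /orP [/eqP -> | /Px].
Qed.

Lemma raddf_addKl (U V : zmodType) (f : {additive U -> V}) a x :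
  f (a + x) - f a = f x.
Proof. by rewrite raddfD addrC addKr. Qed.

Definition equicontinuous0 {A B : comPzRingType} (IA : nat -> set A)
    (IB : nat -> set B) (h : nat -> A -> B) : Prop :=
  forall b : set B, open_ideal IB b ->
    exists2 aa : set A, open_ideal IA aa & forall x n, aa x -> b (h n x).

Section Series.
Variables (A B : comPzRingType) (IA : nat -> set A) (IB : nat -> set B).
Variable h : nat -> {additive A -> B}.
Hypothesis h_cvg0 : pointwise_cvg0 IB (fun n => h n).

Local Notation s := (sser IB (fun n => h n)).

Lemma restricted_sser a : restricted (s a).
Proof.
split=> [n | b]; first exact: compl_elt_ccan.
have [n0 hn0] := h_cvg0 a (proj2_sig b).
by exists n0 => n /hn0 b_ha; apply/ker_proj_ccan.
Qed.

Lemma sserD a a' : s (a + a') = sadd (s a) (s a').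
Proof. by apply: funext => n; rewrite /sser raddfD ccanD. Qed.

Lemma scontinuous_sserP : scontinuous IA s <-> equicontinuous0 IA IB (fun n => h n).
Proof.
split=> [s_cont b open_b | h_eq a b].
  have [aa open_aa s_aa] := s_cont 0 (exist _ b open_b).
  exists aa => // x n /s_aa [w [_ w_ker] /(congr1 (fun f => f n)) E].
  by rewrite -(raddf_addKl (h n) 0 x); apply: ccan_cadd_ker (w_ker n) E.
have [aa open_aa h_aa] := h_eq _ (proj2_sig b).
exists aa => // x aa_x; exists (s x); last exact: sserD.
by split=> [|n]; [apply: restricted_sser | apply/ker_proj_ccan/h_aa].
Qed.

Lemma equicontinuous0_continuous_cvg0 :
  equicontinuous0 IA IB (fun n => h n) -> continuous_cvg0 IA IB (fun n => h n).
Proof.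
move=> h_eq; split=> [n a b open_b | a b open_b].
  have [aa open_aa h_aa] := h_eq b open_b.
  by exists aa => // x /h_aa; rewrite raddf_addKl.
have [aa open_aa h_aa] := h_eq b open_b; have [n0 hn0] := h_cvg0 a open_b.
exists aa => //; exists n0 => x n aa_x /hn0 b_ha.
by rewrite raddfD; exact: idealD open_b.1 _ _ b_ha (h_aa _ _ aa_x).
Qed.

Lemma continuous_cvg0_equicontinuous0 :
  fundamental_system IA ->
  continuous_cvg0 IA IB (fun n => h n) -> equicontinuous0 IA IB (fun n => h n).
Proof.
move=> IA_sys [h_cont h_cvg] b open_b.
have [aa [_ [k0 sub_aa]] [n0 h_aa]] := h_cvg 0 b open_b.
have [k sub_k] : exists k, forall x, IA k x -> forall n, (n < n0)%N -> b (h n x).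
  apply: fundamental_system_bound => // n.
  have [aa' [_ [k' sub_aa']] h_aa'] := h_cont n 0 b open_b.
  by exists k' => x /sub_aa' /h_aa'; rewrite add0r raddf0 subr0.
have [k' sub_k'] := IA_sys.2 k k0.
exists (IA k'); first by split; [apply: IA_sys.1 | exists k'].
move=> x n /sub_k' [/sub_k IA_x /sub_aa aa_x].
by case: (ltnP n n0) => [/IA_x | /(h_aa _ _ aa_x)]; rewrite ?add0r.
Qed.

End Series.

Theorem lemma1p30 (A B : comPzRingType) (IA : nat -> set A) (IB : nat -> set B)
    (hA : fundamental_system IA) (hB : fundamental_system IB)
    (hsep : separated IB)
    (h : nat -> {additive A -> B})
    (hpw : pointwise_cvg0 IB (fun n => h n)) :
  let s := sser IB (fun n => h n) in
  (forall a, restricted (s a)) /\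
  (forall a a', s (a + a') = sadd (s a) (s a')) /\
  (scontinuous IA s <->
     ((forall n, hcontinuous IA IB (h n)) /\
      continuous_cvg0 IA IB (fun n => h n))).
Proof.
move=> s; split; first exact: restricted_sser.
split; first exact: sserD.
rewrite scontinuous_sserP //.
split=> [/(equicontinuous0_continuous_cvg0 hpw) h_ccvg | [_ h_ccvg]].
  by split; first exact: h_ccvg.1.
exact: continuous_cvg0_equicontinuous0.
Qed.
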